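(* For a compact (Hausdorff) space $K$ the following are equivalent: (1) $K$ is almost totally disconnected; (2) there is a family $\{(F_i,H_i)\}_{i\in I}$ of pairs of closed subsets of $K$ such that (a) $F_i\cap H_i=\emptyset$ for all $i\in I$; (b) for every $x\in K$ the set $\{i\in I: x\notin F_i\cup H_i\}$ is countable; (c) for any two distinct points $x,y\in K$ there is $i\in I$ with either $x\in F_i$ and $y\in H_i$, or $y\in F_i$ and $x\in H_i$.
   Context: For a set $\Gamma$, $\Sigma_0^1[0,1]^\Gamma$ is the subspace of $[0,1]^\Gamma$ (product topology) consisting of those $x$ with $x_\gamma\in\{0,1\}$ for all but countably many $\gamma$. A compact space is almost totally disconnected if it is homeomorphic to a subspace of $\Sigma_0^1[0,1]^\Gamma$ for some set $\Gamma$. *)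

From Stdlib Require Import Reals List.
Open Scope R_scope.

Record TopSpace := {
  carrier :> Type;
  is_open : (carrier -> Prop) -> Prop;
  open_full : is_open (fun _ => True);
  open_inter : forall U V, is_open U -> is_open V ->
      is_open (fun x => U x /\ V x);
  open_union : forall (Fam : (carrier -> Prop) -> Prop),
      (forall U, Fam U -> is_open U) ->
      is_open (fun x => exists U, Fam U /\ U x)
}.

Arguments is_open {t} _.

Definition is_closed {X : TopSpace} (C : X -> Prop) : Prop :=
  is_open (fun x => ~ C x).

Definition top_compact (X : TopSpace) : Prop :=
  forall Fam : (X -> Prop) -> Prop,
    (forall U, Fam U -> is_open U) ->
    (forall x : X, exists U, Fam U /\ U x) ->
    exists l : list (X -> Prop),
      (forall U, In U l -> Fam U) /\ (forall x : X, exists U, In U l /\ U x).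

Definition top_hausdorff (X : TopSpace) : Prop :=
  forall x y : X, x <> y ->
    exists U V : X -> Prop, is_open U /\ is_open V /\ U x /\ V y /\
      (forall z, ~ (U z /\ V z)).

Definition countable_set {T : Type} (A : T -> Prop) : Prop :=
  exists f : T -> nat, forall a b, A a -> A b -> f a = f b -> a = b.

(* Product topology on R^Gamma (standard topology of R on each factor):
   U is open iff every point of U has a basic neighbourhood inside U,
   a basic neighbourhood being given by finitely many coordinates and a
   radius. *)
Definition prod_open (Gamma : Type) (U : (Gamma -> R) -> Prop) : Prop :=
  forall x, U x -> exists (gs : list Gamma) (eps : R), 0 < eps /\
    forall y, (forall g, In g gs -> Rabs (y g - x g) < eps) -> U y.

Definition Sigma01 (Gamma : Type) (x : Gamma -> R) : Prop :=
  (forall g, 0 <= x g <= 1) /\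
  countable_set (fun g => x g <> 0 /\ x g <> 1).

(* e : K -> R^Gamma is a homeomorphism of K onto its image, the image
   carrying the subspace topology of the product topology of R^Gamma
   (equivalently of [0,1]^Gamma or of Sigma_0^1[0,1]^Gamma, since subspace
   topologies are transitive). *)
Definition embedding (K : TopSpace) (Gamma : Type) (e : K -> (Gamma -> R))
  : Prop :=
  (forall a b, e a = e b -> a = b) /\
  (forall V, prod_open Gamma V -> is_open (fun k => V (e k))) /\
  (forall U : K -> Prop, is_open U ->
     exists V, prod_open Gamma V /\ forall k, U k <-> V (e k)).

Definition almost_totally_disconnected (K : TopSpace) : Prop :=
  exists (Gamma : Type) (e : K -> (Gamma -> R)),
    (forall k, Sigma01 Gamma (e k)) /\ embedding K Gamma e.

(* (1) => (2).  Given an embedding e of K into Sigma_0^1[0,1]^Gamma, take the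
   index set Gamma x {dyadic intervals [k/2^n, (k+1)/2^n]} and, for the index
   (g, [p, q]), the closed sets F = {e_g <= p} and H = {e_g >= q}.  A point x
   lies outside F u H only if p < x_g < q, which forces x_g to be neither 0
   nor 1; so only countably many indices miss x.  Two distinct points differ
   in some coordinate, and a dyadic interval fits strictly between them.

   (2) => (1).  A compact Hausdorff space is normal; Urysohn's lemma (proved
   here from scratch, via a dyadic ladder of open/closed sets) gives for each
   i a continuous u_i : K -> [0,1] equal to 0 on F_i and 1 on H_i.  The map
   e = (u_i)_i lands in Sigma_0^1[0,1]^I by (b), is injective by (c) and is
   continuous; a continuous injection of a compact space into the product is
   an embedding, which we prove directly by showing that the image of an open
   set is relatively open. *)
From Stdlib Require Import Reals List.
From Stdlib Require Import Lra Lia ZArith Classical ClassicalEpsilon FunctionalExtensionality PropExtensionality.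
From Stdlib Require Cantor.
Open Scope R_scope.

Lemma open_ext {K : TopSpace} (U W : K -> Prop) :
  (forall z, U z <-> W z) -> is_open U -> is_open W.
Proof.
  intros h hU. replace W with U; auto.
  apply functional_extensionality; intros z; apply propositional_extensionality; auto.
Qed.

Lemma closed_ext {K : TopSpace} (C D : K -> Prop) :
  (forall z, C z <-> D z) -> is_closed C -> is_closed D.
Proof.
  intros h hC. unfold is_closed in *. eapply open_ext; [|exact hC].
  intro z; specialize (h z); tauto.
Qed.

Lemma closed_compl_open {K : TopSpace} (U : K -> Prop) :
  is_open U -> is_closed (fun x => ~ U x).
Proof. intro h. unfold is_closed. eapply open_ext; [|exact h]. intro z; tauto. Qed.

Definition disjoint {T : Type} (U V : T -> Prop) : Prop := forall z, ~ (U z /\ V z).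

Definition P_separated {K : TopSpace} (P : (K -> Prop) -> Prop) (W : K -> Prop) :=
  is_open W /\ exists V, is_open V /\ P V /\ disjoint W V.

Lemma P_separated_list {K : TopSpace} (P : (K -> Prop) -> Prop)
  (P_full : P (fun _ => True))
  (P_inter : forall V1 V2, P V1 -> P V2 -> P (fun z => V1 z /\ V2 z)) :
  forall l : list (K -> Prop), exists V, is_open V /\ P V /\
    forall W, In W l -> P_separated P W -> disjoint W V.
Proof.
  induction l as [|W l IH].
  - exists (fun _ => True). split; [apply open_full|]. split; auto. intros W [].
  - destruct IH as [V0 [hV0 [pV0 dV0]]].
    destruct (classic (P_separated P W)) as [[hW [V1 [hV1 [pV1 dV1]]]]|ng].
    + exists (fun z => V0 z /\ V1 z). split; [apply open_inter; auto|]. split; [auto|].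
      intros W' [<-|i] gW' z [a [b c]].
      * apply (dV1 z); auto.
      * apply (dV0 W' i gW' z); auto.
    + exists V0. split; auto. split; auto. intros W' [<-|i] gW'; [contradiction|auto].
Qed.

(* If every point of a closed set A has a P-separated neighbourhood, then A
   itself has one (cover A by those neighbourhoods plus the complement of A
   and extract a finite subcover). *)
Lemma compact_separation (K : TopSpace) (hK : top_compact K) (A : K -> Prop)
  (hA : is_closed A) (P : (K -> Prop) -> Prop)
  (P_full : P (fun _ => True))
  (P_inter : forall V1 V2, P V1 -> P V2 -> P (fun z => V1 z /\ V2 z))
  (local : forall x, A x -> exists W V, is_open W /\ is_open V /\ W x /\ P V /\ disjoint W V) :
  exists U V, is_open U /\ is_open V /\ (forall z, A z -> U z) /\ P V /\ disjoint U V.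
Proof.
  destruct (hK (fun W => P_separated P W \/ W = (fun x => ~ A x))) as [l [hl cov]].
  - intros U [g|e]; [apply g|subst U; exact hA].
  - intro x. destruct (classic (A x)) as [a|na].
    + destruct (local x a) as [W [V [hW [hV [Wx [pV d]]]]]].
      exists W; split; auto. left; split; auto. exists V; auto.
    + exists (fun x => ~ A x); auto.
  - destruct (P_separated_list P P_full P_inter l) as [V [hV [pV dV]]].
    exists (fun z => exists W, (In W l /\ P_separated P W) /\ W z), V.
    split; [apply open_union; intros U [_ [g _]]; exact g|].
    split; auto. split; [|split; auto].
    + intros z az. destruct (cov z) as [W [i Wz]]. exists W. split; auto. split; auto.
      destruct (hl W i) as [g|e]; auto. subst; contradiction.
    + intros z [[W [[i g] Wz]] Vz]. apply (dV W i g z); auto.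
Qed.

Section Normality.
Variables (K : TopSpace) (hK : top_compact K) (hH : top_hausdorff K).

Lemma regular (B : K -> Prop) (hB : is_closed B) (x : K) (nb : ~ B x) :
  exists U V, is_open U /\ is_open V /\ (forall z, B z -> U z) /\ V x /\ disjoint U V.
Proof.
  apply (compact_separation K hK B hB (fun V => V x)); auto.
  intros y By. assert (nxy : x <> y) by (intro e; subst; contradiction).
  destruct (hH x y nxy) as [U [V [hU [hV [Ux [Vy d]]]]]].
  exists V, U. repeat split; auto. intros z [a b]; apply (d z); auto.
Qed.

Lemma normal (A B : K -> Prop) (hA : is_closed A) (hB : is_closed B) (d : disjoint A B) :
  exists U V, is_open U /\ is_open V /\ (forall z, A z -> U z) /\
    (forall z, B z -> V z) /\ disjoint U V.
Proof.
  apply (compact_separation K hK A hA (fun V => forall z, B z -> V z)); auto.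
  intros y Ay. assert (nb : ~ B y) by (intro b; apply (d y); auto).
  destruct (regular B hB y nb) as [U [V [hU [hV [BU [Vy dd]]]]]].
  exists V, U. repeat split; auto. intros z [a b]; apply (dd z); auto.
Qed.

Definition between (C U V D : K -> Prop) : Prop :=
  is_open V /\ is_closed D /\ (forall z, C z -> V z) /\
  (forall z, V z -> D z) /\ (forall z, D z -> U z).

Lemma interpolation (C U : K -> Prop) (hC : is_closed C) (hU : is_open U)
  (s : forall z, C z -> U z) : exists V D, between C U V D.
Proof.
  destruct (normal C (fun z => ~ U z) hC (closed_compl_open U hU)) as [V [W [hV [hW [CV [nUW d]]]]]].
  - intros z [a b]; apply b; auto.
  - exists V, (fun z => ~ W z). split; auto. split; [apply closed_compl_open; auto|].
    split; auto. split.
    + intros z Vz Wz; apply (d z); auto.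
    + intros z nW. apply NNPP; intro nU; apply nW; auto.
Qed.

End Normality.

Definition dy (k n : nat) : R := INR k / 2 ^ n.

Lemma pow2_pos n : 0 < 2 ^ n.
Proof. apply pow_lt; lra. Qed.

Lemma INR_pow2 n : INR (2 ^ n) = 2 ^ n.
Proof. rewrite pow_INR. replace (INR 2) with 2 by (simpl; lra). reflexivity. Qed.

Lemma dy_one : dy 1 0 = 1.
Proof. unfold dy; simpl; field. Qed.

Lemma dy_nonneg k n : 0 <= dy k n.
Proof. unfold dy. apply Rmult_le_pos; [apply pos_INR|]. left; apply Rinv_0_lt_compat, pow2_pos. Qed.

Lemma dy_lt_succ k n : dy k n < dy (S k) n.
Proof.
  unfold dy. rewrite S_INR. pose proof (pow2_pos n).
  apply Rmult_lt_compat_r; [apply Rinv_0_lt_compat|]; lra.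
Qed.

Lemma dy_lt a n b m : dy a n < dy b m -> (a * 2 ^ m < b * 2 ^ n)%nat.
Proof.
  intro h. unfold dy in h. pose proof (pow2_pos n). pose proof (pow2_pos m).
  apply INR_lt. rewrite !mult_INR, !INR_pow2.
  replace (INR a * 2 ^ m) with (INR a / 2 ^ n * (2 ^ n * 2 ^ m)) by (field; lra).
  replace (INR b * 2 ^ n) with (INR b / 2 ^ m * (2 ^ n * 2 ^ m)) by (field; lra).
  apply Rmult_lt_compat_r; auto. apply Rmult_lt_0_compat; auto.
Qed.

Lemma dy_le1 k n : (k <= 2 ^ n)%nat -> dy k n <= 1.
Proof.
  intro h. apply le_INR in h. rewrite INR_pow2 in h. unfold dy.
  pose proof (pow2_pos n). apply (Rmult_le_reg_r (2 ^ n)); auto. field_simplify; lra.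
Qed.

Lemma one_not_inside_dyadic_interval k n : ~ (dy k n < 1 < dy (S k) n).
Proof.
  rewrite <- dy_one. intros [l r]. apply dy_lt in l. apply dy_lt in r. simpl in l, r. lia.
Qed.

Lemma INR_lt_pow2 n : INR n < 2 ^ n.
Proof.
  induction n as [|n IH]; [simpl; lra|].
  rewrite S_INR. assert (1 <= 2 ^ n) by (apply pow_R1_Rle; lra). simpl. lra.
Qed.

Lemma dyadic_interval_between a b : 0 <= a -> a < b ->
  exists n k, a < dy k n /\ dy (S k) n < b.
Proof.
  intros h0 hab.
  destruct (archimed (2 / (b - a))) as [hn _].
  assert (hz : (0 <= up (2 / (b - a)))%Z).
  { apply le_IZR. assert (0 < 2 / (b - a)) by (apply Rdiv_lt_0_compat; lra). lra. }
  set (n := Z.to_nat (up (2 / (b - a)))).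
  assert (hN : 2 / (b - a) < 2 ^ n).
  { pose proof (INR_lt_pow2 n). unfold n in *. rewrite INR_IZR_INZ, Z2Nat.id in *; auto. lra. }
  pose proof (pow2_pos n) as p2.
  assert (gap : 2 < (b - a) * 2 ^ n).
  { apply (Rmult_lt_compat_l (b - a)) in hN; [|lra].
    replace ((b - a) * (2 / (b - a))) with 2 in hN by (field; lra). exact hN. }
  destruct (archimed (a * 2 ^ n)) as [u1 u2].
  assert (zp : (0 <= up (a * 2 ^ n))%Z).
  { apply le_IZR. assert (0 <= a * 2 ^ n) by (apply Rmult_le_pos; lra). lra. }
  set (k := Z.to_nat (up (a * 2 ^ n))).
  assert (ek : INR k = IZR (up (a * 2 ^ n))) by (unfold k; rewrite INR_IZR_INZ, Z2Nat.id; auto).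
  exists n, k. unfold dy. rewrite S_INR, ek. split.
  - apply (Rmult_lt_reg_r (2 ^ n)); auto. field_simplify; lra.
  - apply (Rmult_lt_reg_r (2 ^ n)); auto. field_simplify; lra.
Qed.

Lemma dyadic_between a b : 0 <= a -> a < b -> b <= 1 ->
  exists n k, (k <= 2 ^ n)%nat /\ a < dy k n < b.
Proof.
  intros h0 hab hb1. destruct (dyadic_interval_between a b h0 hab) as [n [k [l r]]].
  pose proof (dy_lt_succ k n). exists n, k. split; [|lra].
  assert (h : dy k n < dy 1 0) by (rewrite dy_one; lra).
  apply dy_lt in h. simpl in h. lia.
Qed.

Section Urysohn.
Variables (K : TopSpace) (hK : top_compact K) (hH : top_hausdorff K).

Definition interpose (C U : K -> Prop) : (K -> Prop) * (K -> Prop) :=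
  epsilon (inhabits (C, C)) (fun p => is_closed C -> is_open U ->
    (forall z, C z -> U z) -> between K C U (fst p) (snd p)).

Lemma interpose_spec (C U : K -> Prop) (hC : is_closed C) (hU : is_open U)
  (s : forall z, C z -> U z) : between K C U (fst (interpose C U)) (snd (interpose C U)).
Proof.
  unfold interpose. apply (epsilon_spec (inhabits (C, C)) (fun p => is_closed C -> is_open U ->
    (forall z, C z -> U z) -> between K C U (fst p) (snd p))); auto.
  destruct (interpolation K hK hH C U hC hU s) as [V [D h]]. exists (V, D). intros; exact h.
Qed.

Variables (F H : K -> Prop) (hF : is_closed F) (hHc : is_closed H) (hFH : disjoint F H).

(* The dyadic ladder: [rung n k] is a pair (V, D) attached to k/2^n, with
   V open, D closed, V <= D.  Level 0 interposes two rungs between F and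
   ~H; level n+1 keeps the rungs of level n at even positions and
   interposes a new rung between consecutive ones at odd positions. *)
Fixpoint rung (n m : nat) : (K -> Prop) * (K -> Prop) :=
  match n with
  | O => let top := interpose F (fun z => ~ H z) in
         if Nat.eqb m 0 then interpose F (fst top) else top
  | S n' => if Nat.even m then rung n' (Nat.div2 m)
            else interpose (snd (rung n' (Nat.div2 m))) (fst (rung n' (S (Nat.div2 m))))
  end.

Lemma rung_even n k : rung (S n) (2 * k) = rung n k.
Proof. cbn [rung]. rewrite Nat.div2_double, Nat.even_mul. reflexivity. Qed.

Lemma rung_odd n k :
  rung (S n) (S (2 * k)) = interpose (snd (rung n k)) (fst (rung n (S k))).
Proof.
  cbn [rung]. replace (Nat.even (S (2 * k))) with false.
  - rewrite Nat.div2_succ_double. reflexivity.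
  - rewrite Nat.even_succ, Nat.odd_mul. reflexivity.
Qed.

Lemma rung_refine n k j : rung (j + n) (k * 2 ^ j) = rung n k.
Proof.
  induction j as [|j IH].
  - simpl. rewrite Nat.mul_1_r. reflexivity.
  - simpl (S j + n)%nat. rewrite Nat.pow_succ_r'.
    replace (k * (2 * 2 ^ j))%nat with (2 * (k * 2 ^ j))%nat by ring.
    rewrite rung_even. exact IH.
Qed.

Definition ladder (n : nat) : Prop :=
  (forall k, (k <= 2 ^ n)%nat -> is_open (fst (rung n k)) /\
      is_closed (snd (rung n k)) /\ (forall z, fst (rung n k) z -> snd (rung n k) z)) /\
  (forall k, (k < 2 ^ n)%nat -> forall z, snd (rung n k) z -> fst (rung n (S k)) z) /\
  (forall z, F z -> fst (rung n 0) z) /\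
  (forall z, snd (rung n (2 ^ n)) z -> ~ H z).

Lemma ladder_all n : ladder n.
Proof.
  assert (FH : forall z, F z -> ~ H z) by (intros z a b; apply (hFH z); auto).
  destruct (interpose_spec F (fun z => ~ H z) hF hHc FH) as [o1 [c1 [a1 [b1 e1]]]].
  destruct (interpose_spec F _ hF o1 a1) as [o0 [c0 [a0 [b0 e0]]]].
  induction n as [|n IH].
  - split; [|split; [|split]]; simpl rung.
    + intros k hk. destruct k as [|[|k]]; simpl; auto; simpl in hk; lia.
    + intros k hk. destruct k as [|k]; simpl; auto; simpl in hk; lia.
    + simpl; auto.
    + simpl; auto.
  - destruct IH as [A [B [C D]]].
    assert (new : forall k, (k < 2 ^ n)%nat -> between K (snd (rung n k)) (fst (rung n (S k)))
                     (fst (rung (S n) (S (2 * k)))) (snd (rung (S n) (S (2 * k))))).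
    { intros k hk. rewrite rung_odd.
      destruct (A k ltac:(lia)) as [_ [ck _]]. destruct (A (S k) ltac:(lia)) as [ok' _].
      apply interpose_spec; auto. }
    unfold ladder. rewrite Nat.pow_succ_r'. split; [|split; [|split]].
    + intros m hm. destruct (Nat.Even_or_Odd m) as [[k ->]|[k ->]].
      * rewrite rung_even. apply A. lia.
      * rewrite Nat.add_1_r. destruct (new k ltac:(lia)) as [p [q [_ [s _]]]]. auto.
    + intros m hm z. destruct (Nat.Even_or_Odd m) as [[k ->]|[k ->]].
      * rewrite rung_even. destruct (new k ltac:(lia)) as [_ [_ [r _]]]. auto.
      * rewrite Nat.add_1_r. replace (S (S (2 * k))) with (2 * (S k))%nat by lia.
        rewrite rung_even. destruct (new k ltac:(lia)) as [_ [_ [_ [_ t]]]]. auto.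
    + intros z Fz. rewrite <- Nat.mul_0_r with 2%nat, rung_even. auto.
    + intros z. rewrite rung_even. auto.
Qed.

Lemma rung_chain N a b : (a < b)%nat -> (b <= 2 ^ N)%nat ->
  forall z, snd (rung N a) z -> fst (rung N b) z.
Proof.
  destruct (ladder_all N) as [A [B _]].
  induction b as [|b IH]; intros hab hb z h; [lia|].
  destruct (Nat.eq_dec a b) as [->|ne].
  - apply B; auto; lia.
  - apply B; [lia|]. apply (A b ltac:(lia)). apply IH; auto; lia.
Qed.

Lemma rung_monotone n1 k1 n2 k2 : (k2 <= 2 ^ n2)%nat -> dy k1 n1 < dy k2 n2 ->
  forall z, snd (rung n1 k1) z -> fst (rung n2 k2) z.
Proof.
  intros h2 hl z hz. apply dy_lt in hl.
  rewrite <- (rung_refine n1 k1 n2), Nat.add_comm in hz. rewrite <- (rung_refine n2 k2 n1).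
  apply (rung_chain (n1 + n2) (k1 * 2 ^ n2) (k2 * 2 ^ n1)); auto.
  rewrite Nat.pow_add_r. apply Nat.mul_le_mono_r with (p := (2 ^ n1)%nat) in h2. lia.
Qed.

(* The Urysohn function: u(z) = inf ({k/2^n : z in V_{n,k}} u {1}).
   Stdlib provides suprema, so the infimum is taken as - sup of the negatives. *)
Definition level_set (z : K) (r : R) : Prop :=
  (exists n k, (k <= 2 ^ n)%nat /\ r = dy k n /\ fst (rung n k) z) \/ r = 1.

Lemma neg_level_set_bound z : bound (fun r => level_set z (- r)).
Proof.
  exists 0. intros r [[n [k [_ [e _]]]]|e]; [pose proof (dy_nonneg k n)|]; lra.
Qed.

Lemma neg_level_set_inhabited z : exists r, level_set z (- r).
Proof. exists (-1). right. lra. Qed.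

Definition urysohn (z : K) : R :=
  - proj1_sig (completeness _ (neg_level_set_bound z) (neg_level_set_inhabited z)).

Lemma urysohn_le z t : level_set z t -> urysohn z <= t.
Proof.
  intro h. unfold urysohn. destruct (completeness _ _ _) as [m hm]. simpl.
  destruct hm as [ub _].
  assert (ht : level_set z (- - t)) by (rewrite Ropp_involutive; auto).
  specialize (ub _ ht). lra.
Qed.

Lemma urysohn_ge z c : (forall t, level_set z t -> c <= t) -> c <= urysohn z.
Proof.
  intro h. unfold urysohn. destruct (completeness _ _ _) as [m hm]. simpl.
  destruct hm as [_ lub].
  assert (m <= - c); [|lra]. apply lub. intros r hr. specialize (h _ hr). lra.
Qed.

Lemma urysohn_le1 z : urysohn z <= 1.
Proof. apply urysohn_le. right; auto. Qed.

Lemma urysohn_ge0 z : 0 <= urysohn z.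
Proof. apply urysohn_ge. intros t [[n [k [_ [-> _]]]]| ->]; [apply dy_nonneg|lra]. Qed.

Lemma urysohn_F z : F z -> urysohn z = 0.
Proof.
  intro fz. destruct (ladder_all 0) as [_ [_ [C _]]].
  assert (urysohn z <= 0); [|pose proof (urysohn_ge0 z); lra].
  apply urysohn_le. left. exists 0%nat, 0%nat. split; [simpl; lia|].
  split; [unfold dy; simpl; field|auto].
Qed.

Lemma urysohn_H z : H z -> urysohn z = 1.
Proof.
  intro hz. assert (1 <= urysohn z); [|pose proof (urysohn_le1 z); lra].
  apply urysohn_ge. intros t [[n [k [hk [_ o]]]]|e]; [|lra]. exfalso.
  destruct (ladder_all n) as [A [_ [_ D]]].
  apply (D z); auto. destruct (A (2 ^ n)%nat ltac:(lia)) as [_ [_ oc]]. apply oc.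
  destruct (Nat.eq_dec k (2 ^ n)) as [<-|ne]; auto.
  apply (rung_chain n k); auto; [lia|]. apply (A k hk); auto.
Qed.

(* {u < a} is the union of the open rungs below a. *)
Lemma urysohn_lt_open a : is_open (fun z => urysohn z < a).
Proof.
  destruct (Rlt_or_le 1 a) as [h|h].
  - eapply open_ext; [|apply open_full]. intro z; split; auto. intros _. pose proof (urysohn_le1 z); lra.
  - eapply open_ext; [|apply (open_union K (fun W => exists n k, (k <= 2 ^ n)%nat /\
        dy k n < a /\ W = fst (rung n k)))].
    + intro z. split.
      * intros [W [[n [k [hk [ha ->]]]] wz]]. apply Rle_lt_trans with (dy k n); auto.
        apply urysohn_le. left. exists n, k; auto.
      * intro hz. apply NNPP. intro nx.
        assert (a <= urysohn z); [|lra]. apply urysohn_ge. intros t ht.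
        destruct (Rlt_or_le t a) as [lt|]; auto. exfalso.
        destruct ht as [[n [k [hk [e o]]]]|e]; [|lra].
        apply nx. exists (fst (rung n k)). split; auto. exists n, k. subst; auto.
    + intros U [n [k [hk [_ ->]]]]. apply (proj1 (ladder_all n) k hk).
Qed.

(* {u > a} is the union of the complements of the closed rungs above a. *)
Lemma urysohn_gt_open a : is_open (fun z => a < urysohn z).
Proof.
  destruct (Rlt_or_le a 0) as [h|h].
  - eapply open_ext; [|apply open_full]. intro z; split; auto. intros _. pose proof (urysohn_ge0 z); lra.
  - eapply open_ext; [|apply (open_union K (fun W => exists n k, (k <= 2 ^ n)%nat /\
        a < dy k n /\ W = (fun z => ~ snd (rung n k) z)))].
    + intro z. split.
      * intros [W [[n [k [hk [ha ->]]]] wz]]. apply Rlt_le_trans with (dy k n); auto.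
        apply urysohn_ge. intros t [[n1 [k1 [hk1 [-> o]]]]| ->]; [|apply dy_le1; auto].
        destruct (Rlt_or_le (dy k1 n1) (dy k n)) as [lt|]; auto. exfalso.
        apply wz. destruct (ladder_all n) as [A _]. apply (A k hk).
        apply (rung_monotone n1 k1 n k); auto.
        apply (proj1 (ladder_all n1) k1 hk1); auto.
      * intro hz. pose proof (urysohn_le1 z).
        destruct (dyadic_between a (urysohn z)) as [n [k [hk [l1 l2]]]]; auto.
        destruct (dyadic_between (dy k n) (urysohn z)) as [n' [k' [hk' [l1' l2']]]];
          auto; [apply dy_nonneg|].
        exists (fun z => ~ snd (rung n k) z). split; [exists n, k; auto|].
        intro c. assert (urysohn z <= dy k' n'); [|lra].
        apply urysohn_le. left. exists n', k'. split; auto. split; auto.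
        apply (rung_monotone n k n' k'); auto.
    + intros U [n [k [hk [_ ->]]]]. apply (proj1 (ladder_all n) k hk).
Qed.

Lemma urysohn_ball_open c r : is_open (fun z => Rabs (urysohn z - c) < r).
Proof.
  eapply open_ext; [|apply open_inter; [apply (urysohn_gt_open (c - r))|apply (urysohn_lt_open (c + r))]].
  intro z. split.
  - intros [a b]. apply Rabs_def1; lra.
  - intro h. apply Rabs_def2 in h. lra.
Qed.

End Urysohn.

Lemma distinct_coordinate {Gamma : Type} (x y : Gamma -> R) :
  x <> y -> exists g, x g <> y g.
Proof.
  intro nxy. apply NNPP; intro n. apply nxy, functional_extensionality. intro g.
  apply NNPP; intro m; apply n; exists g; auto.
Qed.

Section Embedding.
Variables (K : TopSpace) (Gamma : Type) (e : K -> Gamma -> R).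

Hypothesis coord_ball_open : forall g c r, is_open (fun z => Rabs (e z g - c) < r).

Lemma finite_ball_open gs (c : Gamma -> R) r :
  is_open (fun z => forall g, In g gs -> Rabs (e z g - c g) < r).
Proof.
  induction gs as [|g gs IH].
  - eapply open_ext; [|apply open_full]. intro z; split; auto. intros _ g [].
  - eapply open_ext; [|apply open_inter; [apply (coord_ball_open g (c g) r)|apply IH]].
    intro z; split.
    + intros [a b] g' [<-|i]; auto.
    + intro h; split; [apply h; left; auto|]. intros g0 i; apply h; right; auto.
Qed.

Lemma product_continuous V : prod_open Gamma V -> is_open (fun k => V (e k)).
Proof.
  intro hV.
  eapply open_ext; [|apply (open_union K (fun W => exists k gs eps, V (e k) /\ 0 < eps /\
      (forall y, (forall g, In g gs -> Rabs (y g - e k g) < eps) -> V y) /\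
      W = (fun z => forall g, In g gs -> Rabs (e z g - e k g) < eps)))].
  - intro z. split.
    + intros [W [[k [gs [eps [_ [_ [h ->]]]]]] wz]]. apply h. auto.
    + intro vz. destruct (hV _ vz) as [gs [eps [he h]]].
      exists (fun z' => forall g, In g gs -> Rabs (e z' g - e z g) < eps). split.
      * exists z, gs, eps. auto.
      * intros g _. replace (e z g - e z g) with 0 by ring. rewrite Rabs_R0; auto.
  - intros U [k [gs [eps [_ [_ [_ ->]]]]]]. apply finite_ball_open.
Qed.

(* Openness onto the image.  For a point y off e(K \ U), every k outside U
   has a neighbourhood W whose image stays, in some coordinate g, at distance
   >= dd/2 from y_g.  We call such W far from y. *)
Definition far_from (y : Gamma -> R) (W : K -> Prop) : Prop :=
  is_open W /\ exists k g dd, 0 < dd /\ dd <= Rabs (y g - e k g) /\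
    forall z, W z -> Rabs (e z g - e k g) < dd / 2.

Lemma far_from_list (y : Gamma -> R) :
  forall l : list (K -> Prop), exists gs eps, 0 < eps /\ forall W, In W l -> far_from y W ->
    exists k g dd, In g gs /\ eps <= dd / 2 /\ dd <= Rabs (y g - e k g) /\
      forall z, W z -> Rabs (e z g - e k g) < dd / 2.
Proof.
  induction l as [|W l IH].
  - exists nil, 1. split; [lra|]. intros W [].
  - destruct IH as [gs [eps [he h]]].
    destruct (classic (far_from y W)) as [[_ [k [g [dd [p [q r]]]]]]|nf].
    + exists (g :: gs), (Rmin eps (dd / 2)). split; [apply Rmin_glb_lt; lra|].
      intros W' [<-|i] f'.
      * exists k, g, dd. split; [left; auto|]. split; [apply Rmin_r|]. auto.
      * destruct (h W' i f') as [k' [g' [dd' [a [b c]]]]]. exists k', g', dd'.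
        split; [right; auto|]. split; auto. pose proof (Rmin_l eps (dd / 2)). lra.
    + exists gs, eps. split; auto. intros W' [<-|i] f'; [contradiction|auto].
Qed.

Hypothesis e_inj : forall a b, e a = e b -> a = b.

(* For compact K, the image of an open set U is relatively open: it is the
   trace of the complement of e(K \ U), which is open by compactness of K \ U. *)
Lemma open_onto_image (hK : top_compact K) (U : K -> Prop) : is_open U ->
  exists V, prod_open Gamma V /\ forall k, U k <-> V (e k).
Proof.
  intro hU. exists (fun y => forall k, ~ U k -> y <> e k). split.
  - intros y Vy.
    destruct (hK (fun W => far_from y W \/ W = U)) as [l [hl cov]].
    + intros W [[o _]|eW]; [auto|subst W; auto].
    + intro z. destruct (classic (U z)) as [u|nu]; [exists U; auto|].
      destruct (distinct_coordinate y (e z) (Vy z nu)) as [g ne].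
      assert (pd : 0 < Rabs (y g - e z g)) by (apply Rabs_pos_lt; intro h; apply ne; lra).
      exists (fun z' => Rabs (e z' g - e z g) < Rabs (y g - e z g) / 2). split.
      * left. split; [apply coord_ball_open|].
        exists z, g, (Rabs (y g - e z g)). split; auto. split; [lra|auto].
      * replace (e z g - e z g) with 0 by ring. rewrite Rabs_R0. lra.
    + destruct (far_from_list y l) as [gs [eps [he h]]]. exists gs, eps. split; auto.
      intros y' hy' k nU ek. destruct (cov k) as [W [i wk]].
      destruct (hl W i) as [f|eW]; [|subst W; contradiction].
      destruct (h W i f) as [k0 [g [dd [ig [le [ld b]]]]]].
      specialize (b k wk). specialize (hy' g ig). subst y'.
      apply Rabs_def2 in b. apply Rabs_def2 in hy'.
      assert (Rabs (y g - e k0 g) < dd) by (apply Rabs_def1; lra). lra.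
  - intro k. split.
    + intros u k' nu ek. apply e_inj in ek. subst; contradiction.
    + intro v. apply NNPP; intro nu. apply (v k nu); auto.
Qed.

Lemma compact_embedding (hK : top_compact K) : embedding K Gamma e.
Proof.
  split; [exact e_inj|]. split; [exact product_continuous|]. exact (open_onto_image hK).
Qed.

End Embedding.

Section FamilyFromEmbedding.
Variables (K : TopSpace) (Gamma : Type) (e : K -> Gamma -> R).
Hypothesis e_cont : forall V, prod_open Gamma V -> is_open (fun k => V (e k)).

Lemma coord_le_closed g q : is_closed (fun z => e z g <= q).
Proof.
  apply (closed_ext (fun z => ~ (q < e z g))); [intro z; split; lra|].
  apply closed_compl_open, (e_cont (fun y => q < y g)).
  intros y hy. exists (g :: nil), (y g - q). split; [lra|].
  intros y' h. specialize (h g (or_introl eq_refl)). apply Rabs_def2 in h. lra.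
Qed.

Lemma coord_ge_closed g q : is_closed (fun z => q <= e z g).
Proof.
  apply (closed_ext (fun z => ~ (e z g < q))); [intro z; split; lra|].
  apply closed_compl_open, (e_cont (fun y => y g < q)).
  intros y hy. exists (g :: nil), (q - y g). split; [lra|].
  intros y' h. specialize (h g (or_introl eq_refl)). apply Rabs_def2 in h. lra.
Qed.

Definition below (i : Gamma * (nat * nat)) (z : K) : Prop :=
  let '(g, (n, k)) := i in e z g <= dy k n.

Definition above (i : Gamma * (nat * nat)) (z : K) : Prop :=
  let '(g, (n, k)) := i in dy (S k) n <= e z g.

Lemma missed_coordinate i z : ~ (below i z \/ above i z) ->
  e z (fst i) <> 0 /\ e z (fst i) <> 1.
Proof.
  destruct i as [g [n k]]. simpl. intro h.
  pose proof (one_not_inside_dyadic_interval k n). pose proof (dy_nonneg k n).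
  assert (dy k n < e z g) by (apply Rnot_le_lt; tauto).
  assert (e z g < dy (S k) n) by (apply Rnot_le_lt; tauto).
  split; intro c; rewrite c in *; lra.
Qed.

Lemma to_nat_inj p q : Cantor.to_nat p = Cantor.to_nat q -> p = q.
Proof. intro h. rewrite <- (Cantor.cancel_of_to p), <- (Cantor.cancel_of_to q), h. reflexivity. Qed.

Hypothesis e_Sigma01 : forall k, Sigma01 Gamma (e k).
Hypothesis e_inj : forall a b, e a = e b -> a = b.

Lemma family_of_embedding :
  exists (I : Type) (F H : I -> K -> Prop),
    (forall i, is_closed (F i) /\ is_closed (H i)) /\
    (forall i x, ~ (F i x /\ H i x)) /\
    (forall x : K, countable_set (fun i => ~ (F i x \/ H i x))) /\
    (forall x y : K, x <> y -> exists i, (F i x /\ H i y) \/ (F i y /\ H i x)).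
Proof.
  exists (Gamma * (nat * nat))%type, below, above.
  split; [|split; [|split]].
  - intros [g [n k]]. split; [apply coord_le_closed|apply coord_ge_closed].
  - intros [g [n k]] x. simpl. pose proof (dy_lt_succ k n). lra.
  - (* the missed indices inject into the countable set of bad coordinates
       times the countable set of dyadic intervals *)
    intro x. destruct (e_Sigma01 x) as [_ [code hcode]].
    exists (fun i => Cantor.to_nat (code (fst i), Cantor.to_nat (snd i))).
    intros i j hi hj eq. apply missed_coordinate in hi, hj.
    apply to_nat_inj in eq. injection eq as eg ek. apply to_nat_inj in ek.
    destruct i as [g i], j as [g' j]. simpl in *.
    rewrite (hcode g g' hi hj eg), ek. reflexivity.
  - intros x y nxy.
    destruct (distinct_coordinate (e x) (e y)) as [g ne]; [intro h; apply nxy, e_inj, h|].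
    destruct (e_Sigma01 x) as [bx _], (e_Sigma01 y) as [by' _].
    specialize (bx g). specialize (by' g).
    destruct (Rlt_or_le (e x g) (e y g)) as [lt|ge].
    + destruct (dyadic_interval_between (e x g) (e y g)) as [n [k [l r]]]; try lra.
      exists (g, (n, k)). left. simpl. lra.
    + destruct (dyadic_interval_between (e y g) (e x g)) as [n [k [l r]]]; try lra.
      exists (g, (n, k)). right. simpl. lra.
Qed.

End FamilyFromEmbedding.

Lemma embedding_of_family (K : TopSpace) (hK : top_compact K) (hH : top_hausdorff K)
  (I : Type) (F H : I -> K -> Prop)
  (hc : forall i, is_closed (F i) /\ is_closed (H i))
  (hd : forall i x, ~ (F i x /\ H i x))
  (hcount : forall x : K, countable_set (fun i => ~ (F i x \/ H i x)))
  (hsep : forall x y : K, x <> y -> exists i, (F i x /\ H i y) \/ (F i y /\ H i x)) :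
  almost_totally_disconnected K.
Proof.
  set (e := fun z (i : I) => urysohn K (F i) (H i) z).
  assert (on_F : forall i z, F i z -> e z i = 0).
  { intros i z. destruct (hc i). apply (urysohn_F K hK hH); auto. intro x; apply hd. }
  assert (on_H : forall i z, H i z -> e z i = 1).
  { intros i z. destruct (hc i). apply (urysohn_H K hK hH); auto. intro x; apply hd. }
  assert (e_inj : forall a b, e a = e b -> a = b).
  { intros a b h. apply NNPP; intro n.
    destruct (hsep a b n) as [i [[p q]|[p q]]];
      apply on_F in p; apply on_H in q; rewrite h in *; lra. }
  exists I, e. split.
  - intro k. split.
    + intro i. split; [apply urysohn_ge0|apply urysohn_le1].
    + destruct (hcount k) as [f hf]. exists f. intros i j [i0 i1] [j0 j1].
      apply hf; intros [p|p]; auto using on_F, on_H.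
  - apply (compact_embedding K I e); auto.
    intros i c r. destruct (hc i). apply (urysohn_ball_open K hK hH); auto.
    intro x; apply hd.
Qed.

Theorem lemma3 (K : TopSpace) (hK : top_compact K) (hH : top_hausdorff K) :
  almost_totally_disconnected K <->
  exists (I : Type) (F H : I -> K -> Prop),
    (forall i, is_closed (F i) /\ is_closed (H i)) /\
    (forall i x, ~ (F i x /\ H i x)) /\
    (forall x : K, countable_set (fun i => ~ (F i x \/ H i x))) /\
    (forall x y : K, x <> y ->
       exists i, (F i x /\ H i y) \/ (F i y /\ H i x)).
Proof.
  split.
  - intros [Gamma [e [hs [inj [cont _]]]]]. exact (family_of_embedding K Gamma e cont hs inj).
  - intros [I [F [H [hc [hd [hcount hsep]]]]]].
    exact (embedding_of_family K hK hH I F H hc hd hcount hsep).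
Qed.
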